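(* Consider the circuit that starts from $|\mathbf{0}\rangle\otimes|\psi\rangle$ (first register in the basis state of the trivial representation of $G$), applies $\mathcal{F}_G^{-1}$ to the first register (preparing $\frac{1}{\sqrt{|G|}}\sum_{g\in G}|g\rangle$), applies the controlled group action $U_R=\sum_{g\in G}|g\rangle\langle g|\otimes R(g)$, applies $\mathcal{F}_G$ to the first register, and measures the irrep label $\lambda$. If the input state $|\psi\rangle$ is invariant under the $R$-action of the hidden subgroup $H<G$, the outcome distribution is $$\mathrm{P}_{\mathrm{StateHSP}_\psi}[\lambda]=\frac{d_\lambda}{|G|}\sum_{c\in G/H}\sum_{h\in H}\chi_\lambda(ch)\,\langle\psi|R(c)|\psi\rangle,$$ where $\lambda$ ranges over the irreducible representations of $G$ and $G/H$ denotes a set of coset representatives.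
   Context: $G$ is a finite group with a unitary representation $R:G\to\mathrm{U}(d)$, and $|\psi\rangle\in\mathbb{C}^d$ satisfies $R(h)|\psi\rangle=|\psi\rangle$ for all $h\in H$. $\mathbb{C}^G=\mathrm{span}\{|g\rangle\}_{g\in G}$ is the regular-representation register with orthonormal basis. $\{\rho_\lambda\}$ is a complete set of unitary irreducible representations of $G$, $\rho_\lambda:G\to\mathrm{U}(d_\lambda)$, with characters $\chi_\lambda(g)=\mathrm{Tr}\,\rho_\lambda(g)$. The group Fourier transform is $\mathcal{F}_G|g\rangle=\sum_{\lambda,\,i,j\in[d_\lambda]}\sqrt{d_\lambda/|G|}\,\rho_\lambda(g)_{i,j}|\lambda,i,j\rangle$. *)

From mathcomp Require Import all_boot all_order all_algebra all_fingroup all_solvable all_field all_character.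
Set Implicit Arguments. Unset Strict Implicit. Unset Printing Implicit Defensive.
Import GRing.Theory Num.Theory.
Local Open Scope ring_scope.

Section StateHSP.
Variables (gT : finGroupType) (G : {group gT}).

Definition adjmx m n (A : 'M[algC]_(m, n)) : 'M[algC]_(n, m) := (map_mx (fun x : algC => x^*) A)^T.

Definition unitary_mx n (A : 'M[algC]_n) : Prop := A *m adjmx A = 1%:M.

Definition unitary_rep n (r : mx_representation algC G n) : Prop :=
  forall g, g \in G -> unitary_mx (r g).

Definition braket n (u v : 'cV[algC]_n) : algC := (adjmx u *m v) 0 0.
Definition sqnorm n (v : 'cV[algC]_n) : algC := \sum_k `|v k 0| ^+ 2.

Variables (dim : Iirr G -> nat) (rho : forall l : Iirr G, mx_representation algC G (dim l)).
Variable (D : nat).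

(* States of C^G (x) C^D : amplitude vector g |-> component in C^D (only g in G matter). *)
Definition gstate := gT -> 'cV[algC]_D.
(* States of the Fourier basis {|l,i,j>} (x) C^D. *)
Definition fstate := forall l : Iirr G, 'I_(dim l) -> 'I_(dim l) -> 'cV[algC]_D.

Definition fcoef (l : Iirr G) : algC := sqrtC ((dim l)%:R / #|G|%:R).

Definition QFT (f : gstate) : fstate :=
  fun l i j => \sum_(g in G) (fcoef l * rho l g i j) *: f g.

Definition IQFT (v : fstate) : gstate :=
  fun g => \sum_(l : Iirr G) \sum_(i < dim l) \sum_(j < dim l)
             (fcoef l * (rho l g i j)^*) *: v l i j.

(* |0> (x) |psi>, where |0> is the basis state of the trivial irrep 0 (dimension 1) *)
Definition init_state (psi : 'cV[algC]_D) : fstate :=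
  fun l i j => if (l == 0) && (val i == 0%N) && (val j == 0%N) then psi else 0.

Definition ctrl_act (R : mx_representation algC G D) (f : gstate) : gstate :=
  fun g => R g *m f g.

Definition prob_label (v : fstate) (l : Iirr G) : algC :=
  \sum_(i < dim l) \sum_(j < dim l) sqnorm (v l i j).

Definition StateHSP_prob (R : mx_representation algC G D) (psi : 'cV[algC]_D)
  (l : Iirr G) : algC :=
  prob_label (QFT (ctrl_act R (IQFT (init_state psi)))) l.

End StateHSP.

From mathcomp Require Import all_boot all_order all_algebra all_fingroup all_solvable all_field all_character.
From mathcomp Require Import ring.
Set Implicit Arguments.
Unset Strict Implicit.
Unset Printing Implicit Defensive.
Import GRing.Theory Num.Theory.
Local Open Scope ring_scope.

(* After F_G^{-1} and U_R the first register holds |G|^{-1/2} sum_g |g> (x) R(g)psi,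
   so the amplitude of |l,i,j> is proportional to sum_g rho_l(g)_ij R(g)psi.  Squaring,
   unitarity turns sum_ij conj(rho_l(g)_ij) rho_l(g')_ij into chi_l(g^-1 g') and
   <R(g)psi|R(g')psi> into <psi|R(g^-1 g')psi>, so the probability is
   d_l/|G| sum_x chi_l(x) <psi|R(x)psi>.  Writing x = c h along a transversal of
   G/H and using R(h)psi = psi gives the formula. *)

Lemma adjmxM m n p (A : 'M[algC]_(m, n)) (B : 'M[algC]_(n, p)) :
  adjmx (A *m B) = adjmx B *m adjmx A.
Proof. by rewrite /adjmx map_mxM trmx_mul. Qed.

Lemma braketE n (u v : 'cV[algC]_n) : braket u v = \sum_k (u k 0)^* * v k 0.
Proof. by rewrite /braket mxE; apply: eq_bigr => k _; rewrite /adjmx !mxE. Qed.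

Lemma sqnorm_braket n (v : 'cV[algC]_n) : sqnorm v = braket v v.
Proof. by rewrite braketE; apply: eq_bigr => k _; rewrite normCKC. Qed.

Lemma braket_sumZ (I : finType) (P : pred I) n (a b : I -> algC) (u v : I -> 'cV[algC]_n) :
  braket (\sum_(i | P i) a i *: u i) (\sum_(j | P j) b j *: v j) =
  \sum_(i | P i) \sum_(j | P j) ((a i)^* * b j) * braket (u i) (v j).
Proof.
rewrite braketE.
under eq_bigr => k _ do rewrite !summxE rmorph_sum mulr_suml.
rewrite exchange_big; apply: eq_bigr => i _.
under eq_bigr => k _ do rewrite mulr_sumr.
rewrite exchange_big; apply: eq_bigr => j _.
rewrite braketE mulr_sumr; apply: eq_bigr => k _.
by rewrite !mxE rmorphM /=; ring.
Qed.

Lemma conj_sqrtC_mulK (x : algC) : 0 <= x -> (sqrtC x)^* * sqrtC x = x.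
Proof. by move=> x_ge0; rewrite -normCKC ger0_norm ?sqrtC_ge0 // sqrtCK. Qed.

Lemma sum_mulVgl (gT : finGroupType) (G : {group gT}) (V : nmodType) (f : gT -> V) g :
  g \in G -> \sum_(x in G) f (g^-1 * x)%g = \sum_(x in G) f x.
Proof.
move=> Gg; rewrite (reindex_inj (mulgI g)) /=.
by apply: eq_big => [x|x _]; rewrite ?groupMl // mulKg.
Qed.

Lemma sum_transversal (gT : finGroupType) (G H : {group gT}) (T : {set gT})
    (V : nmodType) (f : gT -> V) :
  H \subset G -> is_transversal T (lcosets H G) G ->
  \sum_(x in G) f x = \sum_(c in T) \sum_(h in H) f (c * h)%g.
Proof.
move=> sHG trT.
have partHG : partition (lcosets H G) G by case/and3P: trT.
have tiHG : trivIset (lcosets H G) by case/and3P: partHG.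
rewrite (set_partition_big _ partHG) -(pblock_transversal trT).
rewrite big_imset /=; last exact: pblock_inj trT.
apply: eq_bigr => c Tc.
have Gc : c \in G by apply: (subsetP (transversal_sub trT)).
have cH_coset : (c *: H)%g \in lcosets H G by apply/lcosetsP; exists c.
rewrite (def_pblock tiHG cH_coset) ?lcoset_refl // -lcosetE.
by rewrite big_imset //=; apply: in2W; apply: mulgI.
Qed.

Section UnitaryRepresentation.
Variables (gT : finGroupType) (G : {group gT}) (n : nat).
Variable r : mx_representation algC G n.
Hypothesis r_unitary : unitary_rep r.

Lemma adjmx_repr g : g \in G -> adjmx (r g) = r g^-1%g.
Proof.
move=> Gg; rewrite -[adjmx _]mul1mx -(repr_mxKV r Gg 1%:M) mul1mx -mulmxA.
by rewrite r_unitary // mulmx1.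
Qed.

Lemma braket_repr g g' (u v : 'cV[algC]_n) : g \in G -> g' \in G ->
  braket (r g *m u) (r g' *m v) = braket u (r (g^-1 * g')%g *m v).
Proof.
by move=> Gg Gg'; rewrite /braket adjmxM adjmx_repr // repr_mxM ?groupV // !mulmxA.
Qed.

Lemma mxtrace_repr_mulVg g g' : g \in G -> g' \in G ->
  \tr (r (g^-1 * g')%g) = \sum_i \sum_j (r g i j)^* * r g' i j.
Proof.
move=> Gg Gg'; rewrite repr_mxM ?groupV // -adjmx_repr // /mxtrace exchange_big.
by apply: eq_bigr => i _; rewrite mxE; apply: eq_bigr => j _; rewrite /adjmx !mxE.
Qed.

End UnitaryRepresentation.

Section TrivialCharacter.
Variables (gT : finGroupType) (G : {group gT}) (n : nat).
Variable r : mx_representation algC G n.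
Hypothesis r_trivial : cfRepr r = 1.

Lemma cfRepr1_dim : n = 1%N.
Proof. by apply/eqP; rewrite -(eqr_nat algC) -(cfRepr1 r) r_trivial cfun1E group1. Qed.

Lemma cfRepr1_mx1 g : g \in G -> r g = 1%:M.
Proof. by move=> Gg; apply: max_cfRepr_mx1; rewrite // r_trivial !cfun1E Gg group1. Qed.

End TrivialCharacter.

Section StateHSP.
Variables (gT : finGroupType) (G : {group gT}).
Variables (dim : Iirr G -> nat) (rho : forall l : Iirr G, mx_representation algC G (dim l)).
Variables (D : nat) (R : mx_representation algC G D) (psi : 'cV[algC]_D).
Hypothesis rho_unitary : forall l, unitary_rep (rho l).
Hypothesis rho_chi : forall l, cfRepr (rho l) = 'chi_l.
Hypothesis R_unitary : unitary_rep R.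

Let rho0_trivial : cfRepr (rho 0) = 1. Proof. by rewrite rho_chi irr0. Qed.

Lemma ord_dim0 (i : 'I_(dim 0)) : val i = 0%N.
Proof. by case: i => i /=; rewrite (cfRepr1_dim rho0_trivial) ltnS leqn0 => /eqP. Qed.

Lemma rho0E g i j : g \in G -> rho 0 g i j = 1.
Proof.
move=> Gg; rewrite cfRepr1_mx1 // mxE.
have -> : i = j by apply: val_inj; rewrite !ord_dim0.
by rewrite eqxx.
Qed.

Lemma conj_fcoef_mulK l : (fcoef dim l)^* * fcoef dim l = (dim l)%:R / #|G|%:R.
Proof. by rewrite conj_sqrtC_mulK // divr_ge0 ?ler0n. Qed.

Lemma IQFT_init_state g : g \in G -> IQFT rho (init_state psi) g = fcoef dim 0 *: psi.
Proof.
move=> Gg; rewrite /IQFT (bigD1 0) //= [X in _ + X]big1 ?addr0; last first.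
  move=> l /negbTE l_neq0.
  by apply: big1 => i _; apply: big1 => j _; rewrite /init_state l_neq0 scaler0.
have init0 i j : (fcoef dim 0 * (rho 0 g i j)^*) *: init_state psi i j = fcoef dim 0 *: psi.
  by rewrite /init_state rho0E // rmorph1 mulr1 !ord_dim0 eqxx.
under eq_bigr => i _ do under eq_bigr => j _ do rewrite init0.
by rewrite !sumr_const !card_ord (cfRepr1_dim rho0_trivial).
Qed.

Lemma QFT_StateHSP l i j :
  QFT rho (ctrl_act R (IQFT rho (init_state psi))) i j =
  \sum_(g in G) (fcoef dim l * fcoef dim 0 * rho l g i j) *: (R g *m psi).
Proof.
apply: eq_bigr => g Gg.
by rewrite /ctrl_act IQFT_init_state // -scalemxAr scalerA mulrAC.
Qed.

Let chi_braket l x := \tr (rho l x) * braket psi (R x *m psi).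

Lemma StateHSP_amplitude_pair l g g' : g \in G -> g' \in G ->
  \sum_(i < dim l) \sum_(j < dim l)
     ((fcoef dim l * fcoef dim 0 * rho l g i j)^* * (fcoef dim l * fcoef dim 0 * rho l g' i j))
     * braket (R g *m psi) (R g' *m psi) =
  (fcoef dim l)^* * fcoef dim l * ((fcoef dim 0)^* * fcoef dim 0) * chi_braket l (g^-1 * g')%g.
Proof.
move=> Gg Gg'; rewrite braket_repr // /chi_braket mxtrace_repr_mulVg //.
rewrite mulr_suml mulr_sumr; apply: eq_bigr => i _.
rewrite mulr_suml mulr_sumr; apply: eq_bigr => j _.
by rewrite !rmorphM /=; ring.
Qed.

Lemma StateHSP_prob_sum l :
  StateHSP_prob rho R psi l = (dim l)%:R / #|G|%:R * \sum_(x in G) chi_braket l x.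
Proof.
rewrite /StateHSP_prob /prob_label.
under eq_bigr => i _ do under eq_bigr => j _ do
  rewrite QFT_StateHSP sqnorm_braket braket_sumZ.
under eq_bigr => i _ do rewrite exchange_big.
under eq_bigr => i _ do under eq_bigr => g _ do rewrite exchange_big.
rewrite exchange_big; under eq_bigr => g _ do rewrite exchange_big.
under eq_bigr => g Gg do under eq_bigr => g' Gg' do rewrite StateHSP_amplitude_pair //.
under eq_bigr => g Gg do rewrite -mulr_sumr (sum_mulVgl (chi_braket l) Gg).
rewrite sumr_const !conj_fcoef_mulK (cfRepr1_dim rho0_trivial) -mulr_natr.
have G_neq0 : #|G|%:R != 0 :> algC by rewrite pnatr_eq0 -lt0n cardG_gt0.
by field.
Qed.

End StateHSP.

Theorem fact3p4 (gT : finGroupType) (G H : {group gT})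
  (dim : Iirr G -> nat) (rho : forall l : Iirr G, mx_representation algC G (dim l))
  (D : nat) (R : mx_representation algC G D) (psi : 'cV[algC]_D) (T : {set gT}) :
  (forall l, unitary_rep (rho l)) ->
  (forall l, cfRepr (rho l) = 'chi_l) ->
  unitary_rep R ->
  H \subset G ->
  (forall h, h \in H -> R h *m psi = psi) ->
  is_transversal T (lcosets H G) G ->
  forall l : Iirr G,
    StateHSP_prob rho R psi l =
    (dim l)%:R / #|G|%:R *
      \sum_(c in T) \sum_(h in H) \tr (rho l (c * h)%g) * braket psi (R c *m psi).
Proof.
move=> rho_unitary rho_chi R_unitary sHG psi_Hfixed trT l.
rewrite StateHSP_prob_sum // (sum_transversal _ sHG trT); congr (_ * _).
apply: eq_bigr => c Tc; apply: eq_bigr => h Hh.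
have Gc : c \in G by apply: (subsetP (transversal_sub trT)).
have Gh : h \in G by apply: (subsetP sHG).
by rewrite (repr_mxM R Gc Gh) -mulmxA psi_Hfixed.
Qed.
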